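(* For every $n\ge1$ and every $(a_1,\dots,a_n)\in\mathbb R^n\setminus\{0\}$, the system $\dot x_i=x_i\big(\sum_{j>i}a_jx_j-\sum_{j<i}a_jx_j\big)$, $i=1,\dots,n$, admits $n-1$ functionally independent (rational) first integrals; hence it is superintegrable.
   Context: This system is the Hamiltonian vector field of $H=a_1x_1+\dots+a_nx_n$ with respect to the Poisson bracket on $\mathbb R^n$ given by $\{x_i,x_j\}=x_ix_j$ for $1\le i<j\le n$. Functional independence means the differentials are linearly independent on a dense open subset. *)

(* classical reals. Points of R^n are represented as
   x : nat -> R, of which only the coordinates 0..n-1 are used. *)
From Stdlib Require Import Reals.
Open Scope R_scope.

Fixpoint sum_upto (k : nat) (f : nat -> R) : R :=
  match k with
  | O => 0
  | S k' => sum_upto k' f + f k'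
  end.

Definition vf (n : nat) (a : nat -> R) (x : nat -> R) (i : nat) : R :=
  x i * (sum_upto n (fun j => if Nat.ltb i j then a j * x j else 0)
         - sum_upto i (fun j => a j * x j)).

(* Rational functions with real coefficients, as expressions. *)
Inductive rexpr : Type :=
| RVar : nat -> rexpr
| RConst : R -> rexpr
| RAdd : rexpr -> rexpr -> rexpr
| RMul : rexpr -> rexpr -> rexpr
| ROpp : rexpr -> rexpr
| RInv : rexpr -> rexpr.

Fixpoint reval (e : rexpr) (x : nat -> R) : R :=
  match e with
  | RVar i => x i
  | RConst c => c
  | RAdd e1 e2 => reval e1 x + reval e2 x
  | RMul e1 e2 => reval e1 x * reval e2 x
  | ROpp e1 => - reval e1 x
  | RInv e1 => / reval e1 x
  end.

Fixpoint rdefined (e : rexpr) (x : nat -> R) : Prop :=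
  match e with
  | RVar _ | RConst _ => True
  | RAdd e1 e2 | RMul e1 e2 => rdefined e1 x /\ rdefined e2 x
  | ROpp e1 => rdefined e1 x
  | RInv e1 => rdefined e1 x /\ reval e1 x <> 0
  end.

Fixpoint rvars_lt (n : nat) (e : rexpr) : Prop :=
  match e with
  | RVar i => (i < n)%nat
  | RConst _ => True
  | RAdd e1 e2 | RMul e1 e2 => rvars_lt n e1 /\ rvars_lt n e2
  | ROpp e1 | RInv e1 => rvars_lt n e1
  end.

Definition upd (x : nat -> R) (i : nat) (t : R) : nat -> R :=
  fun j => if Nat.eqb j i then t else x j.

Definition has_partial (F : (nat -> R) -> R) (x : nat -> R) (i : nat) (l : R) : Prop :=
  derivable_pt_lim (fun t => F (upd x i t)) (x i) l.

Definition first_integral (n : nat) (a : nat -> R) (e : rexpr) : Prop :=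
  forall x, rdefined e x ->
    exists d : nat -> R,
      (forall i, (i < n)%nat -> has_partial (reval e) x i (d i)) /\
      sum_upto n (fun i => d i * vf n a x i) = 0.

Definition open_n (n : nat) (U : (nat -> R) -> Prop) : Prop :=
  forall x, U x -> exists eps, eps > 0 /\
    forall y, (forall i, (i < n)%nat -> Rabs (y i - x i) < eps) -> U y.

Definition dense_n (n : nat) (U : (nat -> R) -> Prop) : Prop :=
  forall x eps, eps > 0 -> exists y, U y /\
    forall i, (i < n)%nat -> Rabs (y i - x i) < eps.

Definition indep_at (n m : nat) (F : nat -> rexpr) (x : nat -> R) : Prop :=
  (forall k, (k < m)%nat -> rdefined (F k) x) /\
  exists D : nat -> nat -> R,
    (forall k i, (k < m)%nat -> (i < n)%nat -> has_partial (reval (F k)) x i (D k i)) /\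
    forall c : nat -> R,
      (forall i, (i < n)%nat -> sum_upto m (fun k => c k * D k i) = 0) ->
      forall k, (k < m)%nat -> c k = 0.

Definition functionally_independent (n m : nat) (F : nat -> rexpr) : Prop :=
  exists U : (nat -> R) -> Prop,
    open_n n U /\ dense_n n U /\ forall x, U x -> indep_at n m F x.

(* Let M be the last index with a_M <> 0, and write P_j = a_0 x_0 + ... + a_(j-1) x_(j-1)
   and S_j = P_n - P_j.  Along the flow every coordinate and every S_j is a Darboux
   polynomial: x_i' = (S_(i+1) - P_i) x_i and S_j' = - P_j S_j.  A quotient of such
   polynomials is a first integral as soon as the cofactors of numerator and denominator
   add up to the same value; this yields H = S_0, the integrals
   x_c S_(c+2) / (S_c x_(c+1)) for c + 2 <= M and, for c > M, x_c x_(M-1) / (S_(M-1) S_M)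
   (x_c / x_1 when M = 0).  Off the hyperplanes x_i = 0 and S_j = 0 (j <= M) the
   differentials are independent: the Euler field annihilates the differentials of the
   integrals of degree 0 but not that of H, and every other integral depends on its own
   variable x_c but on none of the x_c' of the integrals before it. *)

From Stdlib Require Import Reals Lra Lia FunctionalExtensionality.
Open Scope R_scope.

Lemma sum_upto_ext k f g :
  (forall l, (l < k)%nat -> f l = g l) -> sum_upto k f = sum_upto k g.
Proof. induction k; simpl; intros H; auto. rewrite IHk, H; auto. Qed.

Lemma sum_upto_add k f g :
  sum_upto k (fun l => f l + g l) = sum_upto k f + sum_upto k g.
Proof. induction k; simpl; [ring|]. rewrite IHk; ring. Qed.

Lemma sum_upto_scal k c f : sum_upto k (fun l => c * f l) = c * sum_upto k f.
Proof. induction k; simpl; [ring|]. rewrite IHk; ring. Qed.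

Lemma sum_upto_eq0 k f : (forall l, (l < k)%nat -> f l = 0) -> sum_upto k f = 0.
Proof. induction k; simpl; intros H; auto. rewrite IHk, H; auto; ring. Qed.

Lemma sum_upto_single k f p :
  (p < k)%nat -> (forall l, (l < k)%nat -> l <> p -> f l = 0) -> sum_upto k f = f p.
Proof.
  induction k; simpl; intros Hp H; [lia|].
  destruct (Nat.eq_dec p k) as [->|Hpk].
  - rewrite sum_upto_eq0; [ring|]. intros l Hl; apply H; lia.
  - rewrite IHk, (H k); [ring|lia|auto|lia|intros; apply H; lia].
Qed.

Lemma sum_upto_swap n m (F : nat -> nat -> R) :
  sum_upto n (fun i => sum_upto m (fun k => F k i))
  = sum_upto m (fun k => sum_upto n (fun i => F k i)).
Proof.
  induction n; simpl.
  - rewrite sum_upto_eq0; auto.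
  - rewrite IHn, <- sum_upto_add. reflexivity.
Qed.

Lemma sum_upto_from j k f : (j <= k)%nat ->
  sum_upto k (fun l => if Nat.leb j l then f l else 0) = sum_upto k f - sum_upto j f.
Proof.
  induction k; simpl; intros Hjk.
  - replace j with 0%nat by lia. simpl; ring.
  - destruct (Nat.eq_dec j (S k)) as [->|Hj].
    + rewrite sum_upto_eq0.
      * cbn [sum_upto]. destruct (Nat.leb_spec (S k) k); [lia|ring].
      * intros l Hl. destruct (Nat.leb_spec (S k) l); [lia|auto].
    + rewrite IHk by lia. destruct (Nat.leb_spec j k); [ring|lia].
Qed.

(** * Linear forms and their zero sets *)

Definition linform (k : nat) (b v : nat -> R) : R := sum_upto k (fun l => b l * v l).

Definition unit_vec (j : nat) : nat -> R := fun i => if Nat.eqb i j then 1 else 0.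

Lemma linform_unit_vec_r k b j : (j < k)%nat -> linform k b (unit_vec j) = b j.
Proof.
  intros Hj. unfold linform, unit_vec. rewrite (sum_upto_single _ _ j Hj).
  - rewrite Nat.eqb_refl; ring.
  - intros l _ Hl. destruct (Nat.eqb_spec l j); [lia|ring].
Qed.

Lemma linform_unit_vec_l k v j : (j < k)%nat -> linform k (unit_vec j) v = v j.
Proof.
  intros Hj. unfold linform, unit_vec. rewrite (sum_upto_single _ _ j Hj).
  - rewrite Nat.eqb_refl; ring.
  - intros l _ Hl. destruct (Nat.eqb_spec l j); [lia|ring].
Qed.

Lemma linform_upd k b x l t : (l < k)%nat ->
  linform k b (upd x l t) = linform k b x + b l * (t - x l).
Proof.
  unfold linform, upd. induction k; simpl; intros Hl; [lia|].
  destruct (Nat.eqb_spec k l) as [->|Hkl].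
  - rewrite (sum_upto_ext l _ (fun i => b i * x i)); [ring|].
    intros i Hi. destruct (Nat.eqb_spec i l); [lia|auto].
  - rewrite IHk by lia. ring.
Qed.

Lemma Rabs_linform_le k b v eps : (forall l, (l < k)%nat -> Rabs (v l) <= eps) ->
  Rabs (linform k b v) <= sum_upto k (fun l => Rabs (b l)) * eps.
Proof.
  unfold linform. induction k; cbn [sum_upto]; intros Hv.
  - rewrite Rabs_R0. lra.
  - eapply Rle_trans; [apply Rabs_triang|]. rewrite Rmult_plus_distr_r, Rabs_mult.
    apply Rplus_le_compat; [apply IHk; auto|].
    apply Rmult_le_compat_l; [apply Rabs_pos|auto].
Qed.

Lemma linform_sub k b y x :
  linform k b y - linform k b x = linform k b (fun l => y l - x l).
Proof. unfold linform. induction k; cbn [sum_upto]; [ring|]. rewrite <- IHk. ring. Qed.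

Lemma open_n_and n (U V : (nat -> R) -> Prop) :
  open_n n U -> open_n n V -> open_n n (fun x => U x /\ V x).
Proof.
  intros HU HV x [Ux Vx].
  destruct (HU x Ux) as [e1 [He1 H1]], (HV x Vx) as [e2 [He2 H2]].
  exists (Rmin e1 e2). split; [apply Rmin_pos; auto|]. intros y Hy. split.
  - apply H1. intros i Hi. eapply Rlt_le_trans; [apply Hy; auto|apply Rmin_l].
  - apply H2. intros i Hi. eapply Rlt_le_trans; [apply Hy; auto|apply Rmin_r].
Qed.

Lemma dense_n_and n (U V : (nat -> R) -> Prop) :
  open_n n U -> dense_n n U -> dense_n n V -> dense_n n (fun x => U x /\ V x).
Proof.
  intros HUo HU HV x eps He.
  destruct (HU x (eps/2)) as [y [Uy Hy]]; [lra|].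
  destruct (HUo y Uy) as [d [Hd Hball]].
  destruct (HV y (Rmin d (eps/2))) as [z [Vz Hz]]; [apply Rmin_pos; lra|].
  exists z. split; [split|]; auto.
  - apply Hball. intros i Hi. eapply Rlt_le_trans; [apply Hz; auto|apply Rmin_l].
  - intros i Hi. specialize (Hy i Hi). specialize (Hz i Hi).
    assert (Rabs (z i - y i) < eps/2) by (eapply Rlt_le_trans; [apply Hz|apply Rmin_r]).
    replace (z i - x i) with ((z i - y i) + (y i - x i)) by ring.
    eapply Rle_lt_trans; [apply Rabs_triang|]. lra.
Qed.

Lemma open_n_forall n K (P : nat -> (nat -> R) -> Prop) :
  (forall q, (q < K)%nat -> open_n n (P q)) ->
  open_n n (fun x => forall q, (q < K)%nat -> P q x).
Proof.
  induction K; intros HP.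
  - intros x _. exists 1. split; [lra|]. intros; lia.
  - intros x Hx.
    destruct (open_n_and n _ _ (IHK (fun q Hq => HP q ltac:(lia))) (HP K ltac:(lia)) x)
      as [e [He Hball]]; [split; auto|].
    exists e. split; auto. intros y Hy q Hq. destruct (Hball y Hy) as [Hbefore Hlast].
    destruct (Nat.eq_dec q K) as [->|]; [auto|apply Hbefore; lia].
Qed.

Lemma dense_n_forall n K (P : nat -> (nat -> R) -> Prop) :
  (forall q, (q < K)%nat -> open_n n (P q)) ->
  (forall q, (q < K)%nat -> dense_n n (P q)) ->
  dense_n n (fun x => forall q, (q < K)%nat -> P q x).
Proof.
  induction K; intros Ho Hd.
  - intros x eps He. exists x. split; [intros; lia|].
    intros. rewrite Rminus_diag, Rabs_R0; auto.
  - intros x eps He.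
    destruct (dense_n_and n _ _ (open_n_forall n K P (fun q Hq => Ho q ltac:(lia)))
       (IHK (fun q Hq => Ho q ltac:(lia)) (fun q Hq => Hd q ltac:(lia)))
       (Hd K ltac:(lia)) x eps He) as [y [[Hbefore Hlast] Hy]].
    exists y. split; auto. intros q Hq.
    destruct (Nat.eq_dec q K) as [->|]; [auto|apply Hbefore; lia].
Qed.

Lemma open_linform_neq0 n b : open_n n (fun x => linform n b x <> 0).
Proof.
  intros x Hx. set (K := sum_upto n (fun l => Rabs (b l))).
  assert (HK : 0 <= K).
  { unfold K. clear. induction n; cbn [sum_upto]; [lra|]. pose proof (Rabs_pos (b n)); lra. }
  assert (Hpos : 0 < Rabs (linform n b x)) by (apply Rabs_pos_lt; auto).
  exists (Rabs (linform n b x) / (K + 1)). split; [apply Rdiv_lt_0_compat; lra|].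
  intros y Hy Hy0.
  assert (Hbound : Rabs (linform n b y - linform n b x) <= K * (Rabs (linform n b x) / (K + 1))).
  { rewrite linform_sub. apply Rabs_linform_le. intros l Hl. left; apply Hy; auto. }
  rewrite Hy0, Rminus_0_l, Rabs_Ropp in Hbound.
  assert (K * (Rabs (linform n b x) / (K + 1)) < Rabs (linform n b x)).
  { apply (Rmult_lt_reg_r (K + 1)); [lra|]. field_simplify; lra. }
  lra.
Qed.

Lemma dense_linform_neq0 n b : (exists l, (l < n)%nat /\ b l <> 0) ->
  dense_n n (fun x => linform n b x <> 0).
Proof.
  intros [l [Hl Hbl]] x eps He.
  destruct (Req_dec_T (linform n b x) 0) as [Hx0|Hx0].
  - exists (upd x l (x l + eps/2)). rewrite linform_upd, Hx0 by auto. split.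
    + replace (0 + b l * (x l + eps / 2 - x l)) with (b l * (eps/2)) by ring.
      apply Rmult_integral_contrapositive; split; [auto|lra].
    + intros i Hi. unfold upd. destruct (Nat.eqb_spec i l) as [->|].
      * replace (x l + eps / 2 - x l) with (eps/2) by ring. rewrite Rabs_right; lra.
      * rewrite Rminus_diag, Rabs_R0; auto.
  - exists x. split; auto. intros. rewrite Rminus_diag, Rabs_R0; auto.
Qed.

Definition off_hyperplanes (n K : nat) (b : nat -> nat -> R) (x : nat -> R) : Prop :=
  forall q, (q < K)%nat -> linform n (b q) x <> 0.

Lemma open_off_hyperplanes n K b : open_n n (off_hyperplanes n K b).
Proof. apply open_n_forall. intros; apply open_linform_neq0. Qed.

Lemma dense_off_hyperplanes n K b :
  (forall q, (q < K)%nat -> exists l, (l < n)%nat /\ b q l <> 0) ->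
  dense_n n (off_hyperplanes n K b).
Proof.
  intros Hb. apply dense_n_forall; intros q Hq.
  - apply open_linform_neq0.
  - apply dense_linform_neq0; auto.
Qed.

Lemma pivot_rows_independent m n (D : nat -> nat -> R) (w : nat -> R) (p : nat -> nat) :
  sum_upto n (fun i => D 0%nat i * w i) <> 0 ->
  (forall k, (0 < k < m)%nat -> sum_upto n (fun i => D k i * w i) = 0) ->
  (forall k, (S k < m)%nat -> (p k < n)%nat /\ D (S k) (p k) <> 0) ->
  (forall k k', (k < k')%nat -> (S k' < m)%nat -> D (S k') (p k) = 0) ->
  forall c : nat -> R,
    (forall i, (i < n)%nat -> sum_upto m (fun k => c k * D k i) = 0) ->
    forall k, (k < m)%nat -> c k = 0.
Proof.
  intros Hw0 Hw Hpiv Htri c Hc.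
  assert (Hc0 : (0 < m)%nat -> c 0%nat = 0).
  { intros Hm.
    assert (Hsum : sum_upto m (fun k => c k * sum_upto n (fun i => D k i * w i)) = 0).
    { rewrite <- (sum_upto_eq0 n (fun i => sum_upto m (fun k => c k * D k i) * w i))
        by (intros i Hi; rewrite Hc; auto; ring).
      transitivity (sum_upto m (fun k => sum_upto n (fun i => w i * (c k * D k i)))).
      - apply sum_upto_ext. intros k _. rewrite <- sum_upto_scal.
        apply sum_upto_ext. intros; ring.
      - rewrite <- sum_upto_swap. apply sum_upto_ext. intros i _.
        rewrite sum_upto_scal. ring. }
    rewrite (sum_upto_single m _ 0%nat Hm) in Hsum.
    - apply Rmult_integral in Hsum. destruct Hsum; [auto|contradiction].
    - intros k Hk Hk0. rewrite Hw by lia. ring. }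
  intros [|k] Hk; [auto with arith|].
  induction k as [k IH] using (well_founded_induction Wf_nat.lt_wf).
  destruct (Hpiv k Hk) as [Hpk Hpiv_k].
  specialize (Hc (p k) Hpk). rewrite (sum_upto_single m _ (S k) Hk) in Hc.
  - apply Rmult_integral in Hc. destruct Hc; [auto|contradiction].
  - intros [|k'] Hk' Hne; [rewrite Hc0 by lia; ring|].
    destruct (Nat.lt_ge_cases k' k).
    + rewrite IH by lia. ring.
    + rewrite Htri by lia. ring.
Qed.

(** * Symbolic derivatives *)

Fixpoint rder (i : nat) (e : rexpr) : rexpr :=
  match e with
  | RVar j => if Nat.eqb j i then RConst 1 else RConst 0
  | RConst _ => RConst 0
  | RAdd e1 e2 => RAdd (rder i e1) (rder i e2)
  | RMul e1 e2 => RAdd (RMul (rder i e1) e2) (RMul e1 (rder i e2))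
  | ROpp e1 => ROpp (rder i e1)
  | RInv e1 => RMul (ROpp (rder i e1)) (RInv (RMul e1 e1))
  end.

Lemma upd_same x i : upd x i (x i) = x.
Proof.
  apply functional_extensionality; intro j. unfold upd.
  destruct (Nat.eqb_spec j i); subst; auto.
Qed.

Lemma rder_correct e x i :
  rdefined e x -> has_partial (reval e) x i (reval (rder i e) x).
Proof.
  unfold has_partial. induction e; cbn [rdefined reval rder]; intros Hd.
  - unfold upd. destruct (Nat.eqb_spec n i); cbn [reval].
    + apply derivable_pt_lim_id.
    + apply derivable_pt_lim_const.
  - apply (derivable_pt_lim_ext (fct_cte r)); [reflexivity|apply derivable_pt_lim_const].
  - destruct Hd. apply derivable_pt_lim_plus; auto.
  - destruct Hd as [H1 H2].
    pose proof (derivable_pt_lim_mult _ _ _ _ _ (IHe1 H1) (IHe2 H2)) as H.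
    cbv beta in H. rewrite upd_same in H. exact H.
  - apply (derivable_pt_lim_opp _ _ _ (IHe Hd)).
  - destruct Hd as [H1 H2].
    pose proof (derivable_pt_lim_div _ _ _ _ _
                  (derivable_pt_lim_const 1 (x i)) (IHe H1)) as H.
    unfold fct_cte in H. cbv beta in H. rewrite upd_same in H. specialize (H H2).
    replace (- reval (rder i e) x * / (reval e x * reval e x))
      with ((0 * reval e x - reval (rder i e) x * 1) / (reval e x)²)
      by (unfold Rsqr; field; auto).
    apply (derivable_pt_lim_ext _ _ _ _ (fun t => Rmult_1_l _) H).
Qed.

Definition lie (n : nat) (V : nat -> R) (e : rexpr) (x : nat -> R) : R :=
  sum_upto n (fun i => reval (rder i e) x * V i).

Lemma lie_RAdd n V e1 e2 x : lie n V (RAdd e1 e2) x = lie n V e1 x + lie n V e2 x.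
Proof. unfold lie; cbn. rewrite <- sum_upto_add. apply sum_upto_ext; intros; ring. Qed.

Lemma lie_RMul n V e1 e2 x :
  lie n V (RMul e1 e2) x = lie n V e1 x * reval e2 x + reval e1 x * lie n V e2 x.
Proof.
  unfold lie; cbn. rewrite (Rmult_comm _ (reval e2 x)), <- !sum_upto_scal, <- sum_upto_add.
  apply sum_upto_ext; intros; ring.
Qed.

Lemma lie_RConst n V r x : lie n V (RConst r) x = 0.
Proof. unfold lie; cbn. apply sum_upto_eq0; intros; ring. Qed.

Lemma lie_RInv n V e x :
  lie n V (RInv e) x = - lie n V e x * / (reval e x * reval e x).
Proof.
  unfold lie; cbn.
  replace (- sum_upto n (fun i => reval (rder i e) x * V i) * / (reval e x * reval e x))
    with (- / (reval e x * reval e x) * sum_upto n (fun i => reval (rder i e) x * V i))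
    by ring.
  rewrite <- sum_upto_scal. apply sum_upto_ext; intros; ring.
Qed.

Lemma lie_RVar n V j x : (j < n)%nat -> lie n V (RVar j) x = V j.
Proof.
  intros Hj. unfold lie; cbn. rewrite (sum_upto_single _ _ j Hj).
  - rewrite Nat.eqb_refl; cbn; ring.
  - intros l _ Hl. destruct (Nat.eqb_spec j l); [lia|cbn; ring].
Qed.

Lemma lie_unit_vec n e x j : (j < n)%nat -> lie n (unit_vec j) e x = reval (rder j e) x.
Proof.
  intros Hj. unfold lie.
  exact (linform_unit_vec_r n (fun i => reval (rder i e) x) j Hj).
Qed.

Lemma first_integral_of_lie n a e :
  (forall x, rdefined e x -> lie n (vf n a x) e x = 0) -> first_integral n a e.
Proof.
  intros Hlie x Hx. exists (fun i => reval (rder i e) x). split.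
  - intros; apply rder_correct; auto.
  - apply Hlie; auto.
Qed.

Fixpoint rlin (k : nat) (b : nat -> R) : rexpr :=
  match k with
  | O => RConst 0
  | S k' => RAdd (rlin k' b) (RMul (RConst (b k')) (RVar k'))
  end.

Lemma reval_rlin k b x : reval (rlin k b) x = linform k b x.
Proof. induction k; cbn; auto. rewrite IHk. reflexivity. Qed.

Lemma rdefined_rlin k b x : rdefined (rlin k b) x.
Proof. induction k; cbn; tauto. Qed.

Lemma rvars_rlin n k b : (k <= n)%nat -> rvars_lt n (rlin k b).
Proof. induction k; cbn; intros; auto. repeat split; auto; try apply IHk; lia. Qed.

Lemma lie_rlin n V k b x : (k <= n)%nat -> lie n V (rlin k b) x = linform k b V.
Proof.
  unfold linform. induction k; cbn [rlin sum_upto]; intros Hk; [apply lie_RConst|].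
  rewrite lie_RAdd, lie_RMul, lie_RConst, lie_RVar, IHk by lia. cbn [reval]. ring.
Qed.

(** * Darboux functions *)

Definition darboux (n : nat) (V : nat -> R) (e : rexpr) (k : R) (x : nat -> R) : Prop :=
  lie n V e x = k * reval e x.

Lemma darboux_RConst n V r x : darboux n V (RConst r) 0 x.
Proof. unfold darboux. rewrite lie_RConst. ring. Qed.

Lemma darboux_RVar n V i k x : (i < n)%nat -> V i = k * x i -> darboux n V (RVar i) k x.
Proof. unfold darboux. intros Hi HV. rewrite lie_RVar; auto. Qed.

Lemma darboux_rlin n V b k x :
  linform n b V = k * linform n b x -> darboux n V (rlin n b) k x.
Proof. unfold darboux. rewrite lie_rlin, reval_rlin; auto. Qed.

Lemma darboux_RMul n V e1 e2 k1 k2 x :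
  darboux n V e1 k1 x -> darboux n V e2 k2 x -> darboux n V (RMul e1 e2) (k1 + k2) x.
Proof. unfold darboux. intros H1 H2. rewrite lie_RMul, H1, H2. cbn. ring. Qed.

Lemma darboux_RInv n V e k x :
  reval e x <> 0 -> darboux n V e k x -> darboux n V (RInv e) (- k) x.
Proof. unfold darboux. intros He H. rewrite lie_RInv, H. cbn. field. auto. Qed.

Definition rquot (p1 p2 q1 q2 : rexpr) : rexpr := RMul (RMul p1 p2) (RInv (RMul q1 q2)).

Lemma darboux_rquot n V p1 p2 q1 q2 k1 k2 l1 l2 x :
  rdefined (rquot p1 p2 q1 q2) x ->
  darboux n V p1 k1 x -> darboux n V p2 k2 x ->
  darboux n V q1 l1 x -> darboux n V q2 l2 x ->
  darboux n V (rquot p1 p2 q1 q2) (k1 + k2 - (l1 + l2)) x.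
Proof.
  intros [_ [_ Hq]] Hp1 Hp2 Hq1 Hq2. unfold Rminus.
  apply darboux_RMul; [|apply darboux_RInv]; auto; apply darboux_RMul; auto.
Qed.

Lemma lie_rquot_eq0 n V p1 p2 q1 q2 k1 k2 l1 l2 x :
  rdefined (rquot p1 p2 q1 q2) x ->
  darboux n V p1 k1 x -> darboux n V p2 k2 x ->
  darboux n V q1 l1 x -> darboux n V q2 l2 x ->
  k1 + k2 = l1 + l2 -> lie n V (rquot p1 p2 q1 q2) x = 0.
Proof.
  intros Hd Hp1 Hp2 Hq1 Hq2 Hk.
  rewrite (darboux_rquot n V p1 p2 q1 q2 k1 k2 l1 l2 x Hd Hp1 Hp2 Hq1 Hq2), Hk. ring.
Qed.

Lemma lie_rquot_neq0 n V p1 p2 q1 q2 k1 k2 l1 l2 x :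
  rdefined (rquot p1 p2 q1 q2) x ->
  reval p1 x <> 0 -> reval p2 x <> 0 ->
  darboux n V p1 k1 x -> darboux n V p2 k2 x ->
  darboux n V q1 l1 x -> darboux n V q2 l2 x ->
  k1 + k2 <> l1 + l2 -> lie n V (rquot p1 p2 q1 q2) x <> 0.
Proof.
  intros Hd Hp1 Hp2 Hdp1 Hdp2 Hdq1 Hdq2 Hk.
  rewrite (darboux_rquot n V p1 p2 q1 q2 k1 k2 l1 l2 x Hd Hdp1 Hdp2 Hdq1 Hdq2).
  destruct Hd as [_ [_ Hq]]. cbn.
  repeat apply Rmult_integral_contrapositive_currified; auto.
  - intros Hk0. apply Hk. lra.
  - apply Rinv_neq_0_compat; auto.
Qed.

Lemma darboux_RVar_euler n i x : (i < n)%nat -> darboux n x (RVar i) 1 x.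
Proof. intros Hi. apply darboux_RVar; auto. ring. Qed.

Lemma darboux_rlin_euler n b x : darboux n x (rlin n b) 1 x.
Proof. apply darboux_rlin. ring. Qed.

Lemma darboux_RVar_unit_vec n i j x :
  (i < n)%nat -> i <> j -> darboux n (unit_vec j) (RVar i) 0 x.
Proof.
  intros Hi Hij. apply darboux_RVar; auto. unfold unit_vec.
  destruct (Nat.eqb_spec i j); [contradiction|ring].
Qed.

Lemma darboux_RVar_unit_vec_self n i x :
  (i < n)%nat -> x i <> 0 -> darboux n (unit_vec i) (RVar i) (/ x i) x.
Proof.
  intros Hi Hx. apply darboux_RVar; auto. unfold unit_vec.
  rewrite Nat.eqb_refl. field. auto.
Qed.

Lemma darboux_rlin_unit_vec n b j x : (j < n)%nat -> b j = 0 ->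
  darboux n (unit_vec j) (rlin n b) 0 x.
Proof. intros Hj Hb. apply darboux_rlin. rewrite linform_unit_vec_r, Hb; auto. ring. Qed.

Lemma darboux_rlin_unit_vec_self n b j x : (j < n)%nat -> linform n b x <> 0 ->
  darboux n (unit_vec j) (rlin n b) (b j / linform n b x) x.
Proof. intros Hj Hb. apply darboux_rlin. rewrite linform_unit_vec_r; auto. field. auto. Qed.

(** * The system and its first integrals *)

Section System.

Variables (n : nat) (a : nat -> R).

Definition prefix (j : nat) (x : nat -> R) : R := linform j a x.

Definition tail (j : nat) : nat -> R := fun l => if Nat.leb j l then a l else 0.

Definition rtail (j : nat) : rexpr := rlin n (tail j).

Lemma tail_eq0 j l : (l < j)%nat \/ a l = 0 -> tail j l = 0.
Proof. unfold tail. intros [Hl|Hl]; destruct (Nat.leb_spec j l); auto; lia. Qed.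

Lemma linform_tail j v : (j <= n)%nat ->
  linform n (tail j) v = linform n a v - linform j a v.
Proof.
  intros Hj. unfold linform, tail. rewrite <- sum_upto_from by auto.
  apply sum_upto_ext. intros l _. destruct (Nat.leb j l); ring.
Qed.

Lemma linform_tail_succ j v : (j < n)%nat ->
  linform n (tail j) v = a j * v j + linform n (tail (S j)) v.
Proof. intros Hj. rewrite !linform_tail by lia. unfold linform. cbn [sum_upto]. ring. Qed.

Lemma vf_prefix x i : (i < n)%nat ->
  vf n a x i = x i * (prefix n x - prefix (S i) x - prefix i x).
Proof.
  intros Hi. unfold vf, prefix, Nat.ltb.
  rewrite (sum_upto_from (S i) n (fun j => a j * x j)) by lia. reflexivity.
Qed.

Lemma linform_vf j x : (j <= n)%nat ->
  linform j a (vf n a x) = prefix j x * (prefix n x - prefix j x).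
Proof.
  induction j; intros Hj; [cbn; ring|].
  unfold linform in *. cbn [sum_upto]. rewrite IHj, vf_prefix by lia.
  unfold prefix, linform. cbn [sum_upto]. ring.
Qed.

Lemma darboux_RVar_vf x i : (i < n)%nat ->
  darboux n (vf n a x) (RVar i) (prefix n x - prefix (S i) x - prefix i x) x.
Proof. intros Hi. apply darboux_RVar; auto. rewrite vf_prefix; auto. ring. Qed.

Lemma darboux_rtail_vf x j : (j <= n)%nat ->
  darboux n (vf n a x) (rtail j) (- prefix j x) x.
Proof.
  intros Hj. apply darboux_rlin.
  rewrite !linform_tail, !linform_vf by lia. unfold prefix. ring.
Qed.

(* The two cofactors differ by S_(c+1) / (x_c S_c). *)
Lemma cofactor_gap_neq0 x c : (c < n)%nat -> x c <> 0 ->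
  linform n (tail c) x <> 0 -> linform n (tail (S c)) x <> 0 ->
  / x c <> tail c c / linform n (tail c) x.
Proof.
  intros Hc Hxc HSc HSc1 Heq. apply HSc1.
  unfold tail at 1 in Heq. rewrite Nat.leb_refl in Heq.
  rewrite linform_tail_succ in Heq, HSc by auto.
  replace (linform n (tail (S c)) x)
    with (x c * (a c * x c + linform n (tail (S c)) x)
          * (/ x c - a c / (a c * x c + linform n (tail (S c)) x)))
    by (field; auto).
  rewrite Heq. ring.
Qed.

End System.

Definition pivot_col (M c : nat) : Prop := (S (S c) <= M \/ (M < c /\ 1 < c))%nat.

(* Wall q < n is the coordinate hyperplane x_q = 0, wall n + j is S_j = 0. *)
Definition wall (n : nat) (a : nat -> R) (q : nat) : nat -> R :=
  if Nat.ltb q n then unit_vec q else tail a (q - n).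

Definition generic_point (n : nat) (a : nat -> R) (M : nat) : (nat -> R) -> Prop :=
  off_hyperplanes n (n + S M) (wall n a).

Lemma generic_point_coord n a M x i : generic_point n a M x -> (i < n)%nat -> x i <> 0.
Proof.
  intros Hx Hi. specialize (Hx i ltac:(lia)). unfold wall in Hx.
  destruct (Nat.ltb_spec i n); [|lia]. rewrite linform_unit_vec_l in Hx; auto.
Qed.

Lemma generic_point_tail n a M x j : generic_point n a M x -> (j <= M)%nat ->
  linform n (tail a j) x <> 0.
Proof.
  intros Hx Hj. specialize (Hx (n + j)%nat ltac:(lia)). unfold wall in Hx.
  destruct (Nat.ltb_spec (n + j) n); [lia|]. replace (n + j - n)%nat with j in Hx by lia.
  auto.
Qed.

Lemma dense_generic_point n a M : (M < n)%nat -> a M <> 0 ->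
  dense_n n (generic_point n a M).
Proof.
  intros HMn HaM. apply dense_off_hyperplanes. intros q Hq. unfold wall.
  destruct (Nat.ltb_spec q n).
  - exists q. split; auto. unfold unit_vec. rewrite Nat.eqb_refl. lra.
  - exists M. split; [lia|]. unfold tail. destruct (Nat.leb_spec (q - n) M); [auto|lia].
Qed.

Section Integrals.

Variables (n : nat) (a : nat -> R) (M : nat).
Hypothesis HMn : (M < n)%nat.
Hypothesis Hbeyond : forall l, (M < l < n)%nat -> a l = 0.

Definition integral (c : nat) : rexpr :=
  if Nat.leb (S (S c)) M
  then rquot (RVar c) (rtail n a (S (S c))) (rtail n a c) (RVar (S c))
  else match M with
       | O => rquot (RVar c) (RConst 1) (RVar 1) (RConst 1)
       | S m => rquot (RVar c) (RVar m) (rtail n a m) (rtail n a (S m))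
       end.

Lemma prefix_beyond j x : (M < j <= n)%nat -> prefix a j x = prefix a n x.
Proof.
  intros Hj.
  assert (Htail : linform n (tail a j) x = 0).
  { apply sum_upto_eq0. intros l Hl. rewrite tail_eq0; [ring|].
    destruct (Nat.lt_ge_cases l j); [left; auto|right; apply Hbeyond; lia]. }
  rewrite linform_tail in Htail by lia. unfold prefix. lra.
Qed.

Lemma integral_vars c : (c < n)%nat -> pivot_col M c -> rvars_lt n (integral c).
Proof.
  intros Hc Hcol. unfold integral, rquot, rtail, pivot_col in *.
  destruct (Nat.leb_spec (S (S c)) M); [|destruct M as [|m]];
    cbn [rvars_lt]; repeat split; try apply rvars_rlin; lia.
Qed.

Lemma integral_first c x : (c < n)%nat -> pivot_col M c -> rdefined (integral c) x ->
  lie n (vf n a x) (integral c) x = 0.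
Proof.
  intros Hc Hcol Hd. unfold integral in *.
  destruct (Nat.leb_spec (S (S c)) M).
  - eapply lie_rquot_eq0;
      [exact Hd|apply darboux_RVar_vf|apply darboux_rtail_vf|apply darboux_rtail_vf
      |apply darboux_RVar_vf|ring]; lia.
  - destruct Hcol as [|[HMc Hc1]]; [lia|].
    pose proof (fun j => prefix_beyond j x) as HP. destruct M as [|m].
    + eapply lie_rquot_eq0;
        [exact Hd|apply darboux_RVar_vf|apply darboux_RConst|apply darboux_RVar_vf
        |apply darboux_RConst|]; try lia.
      rewrite (HP (S c)), (HP c), (HP 2%nat), (HP 1%nat) by lia. ring.
    + eapply lie_rquot_eq0;
        [exact Hd|apply darboux_RVar_vf|apply darboux_RVar_vf|apply darboux_rtail_vf
        |apply darboux_rtail_vf|]; try lia.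
      rewrite (HP (S c)), (HP c) by lia. ring.
Qed.

Lemma integral_euler c x : (c < n)%nat -> pivot_col M c -> rdefined (integral c) x ->
  lie n x (integral c) x = 0.
Proof.
  intros Hc Hcol Hd. unfold integral, rtail, pivot_col in *.
  destruct (Nat.leb_spec (S (S c)) M); [|destruct M as [|m]];
    (eapply lie_rquot_eq0;
      [exact Hd
      |apply darboux_RVar_euler || apply darboux_rlin_euler || apply darboux_RConst ..
      |ring]); lia.
Qed.

Lemma integral_unit_vec_earlier c j x : (c < n)%nat -> pivot_col M c ->
  pivot_col M j -> (j < c)%nat -> rdefined (integral c) x ->
  lie n (unit_vec j) (integral c) x = 0.
Proof.
  intros Hc Hcol Hj Hjc Hd. unfold integral, rtail, pivot_col in *.
  destruct (Nat.leb_spec (S (S c)) M); [|destruct M as [|m]];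
    (eapply lie_rquot_eq0;
      [exact Hd
      |first [apply darboux_RVar_unit_vec | apply darboux_rlin_unit_vec | apply darboux_RConst] ..
      |ring]);
    try apply tail_eq0; try lia;
    (destruct Hj as [Hj|Hj]; [left; lia|right; apply Hbeyond; lia]).
Qed.

Lemma integral_defined c x : generic_point n a M x -> (c < n)%nat -> pivot_col M c ->
  rdefined (integral c) x.
Proof.
  intros Hx Hc Hcol. unfold integral, rquot, rtail, pivot_col in *.
  destruct (Nat.leb_spec (S (S c)) M); [|destruct M as [|m]];
    cbn [rdefined reval]; rewrite ?reval_rlin;
    repeat split; auto using rdefined_rlin;
    repeat apply Rmult_integral_contrapositive_currified;
    first [apply R1_neq_R0 | eapply generic_point_coord; eauto; lia
          | eapply generic_point_tail; eauto; lia].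
Qed.

Lemma integral_pivot c x : generic_point n a M x -> (c < n)%nat -> pivot_col M c ->
  lie n (unit_vec c) (integral c) x <> 0.
Proof.
  intros Hx Hc Hcol. pose proof (integral_defined c x Hx Hc Hcol) as Hd.
  pose proof (generic_point_coord n a M x c Hx Hc) as Hxc.
  unfold integral, pivot_col in *. destruct (Nat.leb_spec (S (S c)) M).
  - unfold rtail in *.
    pose proof (generic_point_tail n a M x c Hx ltac:(lia)) as HSc.
    pose proof (generic_point_tail n a M x (S c) Hx ltac:(lia)) as HSc1.
    eapply lie_rquot_neq0;
      [exact Hd| |
      |apply darboux_RVar_unit_vec_self|apply darboux_rlin_unit_vec
      |apply darboux_rlin_unit_vec_self|apply darboux_RVar_unit_vec|];
      cbn [reval]; rewrite ?reval_rlin; auto; try lia.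
    + apply (generic_point_tail n a M x); auto.
    + apply tail_eq0. left; lia.
    + rewrite !Rplus_0_r. apply cofactor_gap_neq0; auto.
  - destruct Hcol as [|[HMc Hc1]]; [lia|]. destruct M as [|m].
    + eapply lie_rquot_neq0;
        [exact Hd|exact Hxc|cbn; apply R1_neq_R0
        |apply darboux_RVar_unit_vec_self|apply darboux_RConst
        |apply darboux_RVar_unit_vec|apply darboux_RConst|]; auto; try lia.
      rewrite !Rplus_0_r. apply Rinv_neq_0_compat; auto.
    + unfold rtail in *.
      eapply lie_rquot_neq0;
        [exact Hd|exact Hxc|cbn; eapply generic_point_coord; eauto; lia
        |apply darboux_RVar_unit_vec_self|apply darboux_RVar_unit_vec
        |apply darboux_rlin_unit_vec|apply darboux_rlin_unit_vec|]; auto; try lia;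
        try (apply tail_eq0; right; apply Hbeyond; lia).
      rewrite !Rplus_0_r. apply Rinv_neq_0_compat; auto.
Qed.

End Integrals.

Definition pivot (M k : nat) : nat := if Nat.leb (S (S k)) M then k else S (S k).

Lemma pivot_col_pivot M k : pivot_col M (pivot M k).
Proof. unfold pivot, pivot_col. destruct (Nat.leb_spec (S (S k)) M); lia. Qed.

Lemma pivot_lt n M k : (M < n)%nat -> (S (S k) < n)%nat -> (pivot M k < n)%nat.
Proof. unfold pivot. destruct (Nat.leb_spec (S (S k)) M); lia. Qed.

Lemma pivot_increasing M k k' : (k < k')%nat -> (pivot M k < pivot M k')%nat.
Proof.
  unfold pivot. destruct (Nat.leb_spec (S (S k)) M), (Nat.leb_spec (S (S k')) M); lia.
Qed.

Definition family (n : nat) (a : nat -> R) (M k : nat) : rexpr :=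
  match k with
  | O => rtail n a 0
  | S k' => integral n a M (pivot M k')
  end.

Section Family.

Variables (n : nat) (a : nat -> R) (M : nat).
Hypothesis HMn : (M < n)%nat.
Hypothesis Hbeyond : forall l, (M < l < n)%nat -> a l = 0.

Lemma family_vars k : (k < n - 1)%nat -> rvars_lt n (family n a M k).
Proof.
  intros Hk. destruct k as [|k]; cbn [family].
  - apply rvars_rlin; auto.
  - pose proof (pivot_lt n M k HMn ltac:(lia)).
    apply integral_vars; auto using pivot_col_pivot.
Qed.

Lemma family_first_integral k : (k < n - 1)%nat -> first_integral n a (family n a M k).
Proof.
  intros Hk. apply first_integral_of_lie. intros x Hd. destruct k as [|k]; cbn [family] in *.
  - rewrite (darboux_rtail_vf n a x 0 ltac:(lia)). cbn. ring.
  - pose proof (pivot_lt n M k HMn ltac:(lia)).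
    apply integral_first; auto using pivot_col_pivot.
Qed.

Lemma family_defined x k : generic_point n a M x -> (k < n - 1)%nat ->
  rdefined (family n a M k) x.
Proof.
  intros Hx Hk. destruct k as [|k]; cbn [family]; [apply rdefined_rlin|].
  pose proof (pivot_lt n M k HMn ltac:(lia)).
  apply integral_defined; auto using pivot_col_pivot.
Qed.

Lemma family_indep_at x : generic_point n a M x -> indep_at n (n - 1) (family n a M) x.
Proof.
  intros Hx. split; [intros; apply family_defined; auto|].
  exists (fun k i => reval (rder i (family n a M k)) x). split.
  { intros k i Hk Hi. apply rder_correct, family_defined; auto. }
  apply (pivot_rows_independent (n - 1) n _ x (pivot M)).
  - change (lie n x (rtail n a 0) x <> 0).
    rewrite (darboux_rlin_euler n (tail a 0) x), Rmult_1_l, reval_rlin.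
    apply (generic_point_tail n a M); auto; lia.
  - intros [|k] Hk; [lia|].
    pose proof (family_defined x (S k) Hx ltac:(lia)).
    pose proof (pivot_lt n M k HMn ltac:(lia)).
    apply integral_euler; auto using pivot_col_pivot.
  - intros k Hk. pose proof (pivot_lt n M k HMn ltac:(lia)).
    split; auto. cbn [family]. rewrite <- (lie_unit_vec n) by auto.
    apply integral_pivot; auto using pivot_col_pivot.
  - intros k k' Hkk' Hk'.
    pose proof (family_defined x (S k') Hx ltac:(lia)).
    pose proof (pivot_lt n M k HMn ltac:(lia)).
    pose proof (pivot_lt n M k' HMn ltac:(lia)).
    cbn [family]. rewrite <- (lie_unit_vec n) by auto.
    apply integral_unit_vec_earlier; auto using pivot_col_pivot, pivot_increasing.
Qed.

End Family.

Lemma last_nonzero_coef n (a : nat -> R) : (exists i, (i < n)%nat /\ a i <> 0) ->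
  exists M, (M < n)%nat /\ a M <> 0 /\ forall l, (M < l < n)%nat -> a l = 0.
Proof.
  induction n; intros [i [Hi Hai]]; [lia|].
  destruct (Req_dec_T (a n) 0) as [Han|Han].
  - destruct IHn as [M [HMn [HaM Hbeyond]]].
    + exists i. split; auto. destruct (Nat.eq_dec i n) as [->|]; [contradiction|lia].
    + exists M. repeat split; auto. intros l Hl.
      destruct (Nat.eq_dec l n) as [->|]; [auto|apply Hbeyond; lia].
  - exists n. repeat split; auto. intros; lia.
Qed.

Theorem theorem2p5 (n : nat) (a : nat -> R) :
  (1 <= n)%nat ->
  (exists i, (i < n)%nat /\ a i <> 0) ->
  exists F : nat -> rexpr,
    (forall k, (k < n - 1)%nat -> rvars_lt n (F k) /\ first_integral n a (F k)) /\
    functionally_independent n (n - 1) F.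
Proof.
  intros _ Ha. destruct (last_nonzero_coef n a Ha) as [M [HMn [HaM Hbeyond]]].
  exists (family n a M). split.
  - intros k Hk. split; [apply family_vars|apply family_first_integral]; auto.
  - exists (generic_point n a M). split; [apply open_off_hyperplanes|split].
    + apply dense_generic_point; auto.
    + intros x Hx. apply family_indep_at; auto.
Qed.
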